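(* Let $G=(A\cup B,E)$ be a bipartite graph with $|A|\le 3$. Then for every ordering $\sigma_A$ of $A$, $G$ admits a Stick representation in which, ordering the horizontal segments by where they touch the ground line from left to right, the $i$th horizontal segment corresponds to the $i$th vertex of $\sigma_A$.
   Context: A Stick representation of a bipartite graph $G=(A\cup B,E)$ (with $A$ horizontal and $B$ vertical) assigns to each vertex of $A$ a horizontal segment and to each vertex of $B$ a vertical segment such that the left endpoints of all horizontal segments and the bottom endpoints of all vertical segments lie on a fixed ground line $\ell$ of slope $-1$, and a horizontal and a vertical segment intersect if and only if the corresponding vertices are adjacent in $G$. *)

From HB Require Import structures.
From mathcomp Require Import all_boot all_order all_algebra.
From mathcomp Require Import reals.
Set Implicit Arguments. Unset Strict Implicit. Unset Printing Implicit Defensive.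
Import Order.TTheory GRing.Theory Num.Theory.
Local Open Scope ring_scope.

(* Ground line ell : { (x, y) | x + y = 0 }, i.e. y = -x, slope -1.
   A point of ell is determined by its x-coordinate t, namely (t, -t). *)

Definition on_hseg (R : realType) (t l x y : R) : Prop :=
  y = - t /\ t <= x <= t + l.

Definition on_vseg (R : realType) (t l x y : R) : Prop :=
  x = t /\ - t <= y <= - t + l.

(* A Stick representation of the bipartite graph (A u B, E), where
   E : A -> B -> bool is the edge relation (A horizontal, B vertical):
   hx a / hl a = ground x-coordinate / length of the horizontal segment of a,
   vx b / vl b = ground x-coordinate / length of the vertical segment of b. *)
Definition is_stick_rep (R : realType) (A B : finType) (E : A -> B -> bool)
    (hx hl : A -> R) (vx vl : B -> R) : Prop :=
  (forall a, 0 < hl a) /\ (forall b, 0 < vl b) /\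
  (forall a b, E a b <->
     exists x y : R, on_hseg (hx a) (hl a) x y /\ on_vseg (vx b) (vl b) x y).

(** With the horizontal segments in the prescribed order along the ground
    line, a vertical segment at ground abscissa [s] and of length [m] meets
    exactly those horizontals whose abscissa [t] satisfies [s - m <= t <= s]
    and which are long enough to reach [s]. For three horizontals one fixed
    layout (abscissae 0, 2, 4, the middle one shortest) lets a suitable
    choice of [(s, m)] realise each of the eight possible neighbourhoods, so
    every vertex of [B] can be drawn independently. *)
From HB Require Import structures.
From mathcomp Require Import all_boot all_order all_algebra.
From mathcomp Require Import reals.
From mathcomp Require Import lra.
Import Order.TTheory GRing.Theory Num.Theory.
Local Open Scope ring_scope.

Section StickLayouts.

Variable R : realType.

Definition stick_meets (t l s m : R) : bool := (t <= s <= t + l) && (s - m <= t).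

Lemma stick_meetP (t l s m : R) :
  reflect (exists x y : R, on_hseg t l x y /\ on_vseg s m x y)
          (stick_meets t l s m).
Proof.
apply: (iffP andP) => [[/andP[ts stl] smt] | [x [y [[yt /andP[tx xtl]] [xs /andP[sy ysm]]]]]].
- by exists s, (- t); split; split => //; apply/andP; split; lra.
- by subst x y; split; [apply/andP; split|]; lra.
Qed.

Definition universal_layout {n : nat} (t l : 'I_n -> R) : Prop :=
  [/\ forall i j : 'I_n, (i < j)%N -> t i < t j,
      forall i, 0 < l i
    & forall S : {set 'I_n}, exists2 v : R * R, 0 < v.2
        & forall i, (i \in S) = stick_meets (t i) (l i) v.1 v.2].

Lemma universal_layout_widen (n k : nat) (le_nk : (n <= k)%N) (t l : 'I_k -> R) :
  universal_layout t l ->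
  universal_layout (t \o widen_ord le_nk) (l \o widen_ord le_nk).
Proof.
case=> t_incr l_gt0 t_univ; split=> [i j lt_ij | i | S]; [exact: t_incr | exact: l_gt0 |].
have [v v2_gt0 hv] := t_univ (widen_ord le_nk @: S); exists v => // i.
by rewrite -hv mem_imset // => i1 i2 [/val_inj].
Qed.

Definition ground3 (i : 'I_3) : R := (2 * i)%:R.

Definition length3 (i : 'I_3) : R := (nth 0 [:: 10; 4; 6] i)%:R.

(** The abscissa [s] selects which horizontals have an [x]-range containing
    it, the length [m] then keeps only the last few of them; [{0, 2}] is
    reached past the right end of the short middle segment. *)
Definition column3 (c0 c1 c2 : bool) : R * R :=
  match c0, c1, c2 with
  | false, false, false => (-1, 1)
  | true,  false, false => (1, 2)
  | false, true,  false => (3, 2)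
  | true,  true,  false => (3, 4)
  | false, false, true  => (5, 2)
  | false, true,  true  => (5, 4)
  | true,  true,  true  => (5, 6)
  | true,  false, true  => (8, 9)
  end.

Lemma column3_meets (c0 c1 c2 : bool) (i : 'I_3) :
  let v := column3 c0 c1 c2 in
  stick_meets (ground3 i) (length3 i) v.1 v.2 = nth false [:: c0; c1; c2] i.
Proof.
rewrite /stick_meets /ground3 /length3 /=.
case: i => -[|[|[|]]] //= _; case: c0; case: c1; case: c2; rewrite /= ?mulr0n.
all: by (apply/negbTE/negP => /andP[/andP[? ?] ?]; lra)
     || (apply/andP; split; [apply/andP; split|]; lra).
Qed.

Lemma universal_layout3 : universal_layout ground3 length3.
Proof.
split=> [i j | i | S].
- by rewrite /ground3 ltr_nat ltn_pmul2l.
- by case: i => -[|[|[|]]] //= _; rewrite ltr0n.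
pose c k : bool := inord k \in S.
exists (column3 (c 0) (c 1) (c 2)); first by rewrite /c; do 3!case: (_ \in S).
move=> i; rewrite column3_meets -[in LHS](inord_val i) -/(c i).
by case: i => -[|[|[|]]].
Qed.

Lemma universal_layout_le3 {n : nat} : (n <= 3)%N ->
  exists t l : 'I_n -> R, universal_layout t l.
Proof. by move=> le_n3; do 2!eexists; apply: universal_layout_widen universal_layout3. Qed.

Lemma stick_rep_of_universal_layout (A B : finType) (E : A -> B -> bool)
    (sigma : 'I_#|A| -> A) (t l : 'I_#|A| -> R) :
    injective sigma -> universal_layout t l ->
  exists (hx hl : A -> R) (vx vl : B -> R),
    is_stick_rep E hx hl vx vl /\
    (forall i j : 'I_#|A|, (i < j)%N -> hx (sigma i) < hx (sigma j)).
Proof.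
move=> sigma_inj [t_incr l_gt0 t_univ].
have [rank sigmaK rankK] : bijective sigma by apply: inj_card_bij; rewrite ?card_ord.
have [col col_gt0 col_nbhd] := fin_all_exists2 (fun b => t_univ [set i | E (sigma i) b]).
exists (t \o rank), (l \o rank), (fun b => (col b).1), (fun b => (col b).2).
split; last by move=> i j lt_ij; rewrite /= !sigmaK; apply: t_incr.
split=> [a | ]; first exact: l_gt0.
split=> [b | a b]; first exact: col_gt0.
by rewrite (rwP (stick_meetP _ _ _ _)) -col_nbhd inE rankK.
Qed.

End StickLayouts.

Theorem mainTheorem6 (R : realType) (A B : finType) (E : A -> B -> bool)
    (hA : (#|A| <= 3)%N) (sigma : 'I_#|A| -> A) (hsigma : injective sigma) :
  exists (hx hl : A -> R) (vx vl : B -> R),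
    is_stick_rep E hx hl vx vl /\
    (forall i j : 'I_#|A|, (i < j)%N -> hx (sigma i) < hx (sigma j)).
Proof.
have [t [l layout]] := universal_layout_le3 R hA.
exact: stick_rep_of_universal_layout layout.
Qed.
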